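(* Let $p$ be a prime, let $G$ be a finite $p$-group and let $C$ be a subgroup of $G$ of index $p$. Then for every $g \in G \setminus C$ we have $\log_p |G'| \leq b(g) + \log_p |C'|$.
   Context: $G'$ and $C'$ denote the derived subgroups of $G$ and $C$. For $g$ in a finite $p$-group $G$, the breadth $b(g)$ is defined by $|G : C_G(g)| = p^{b(g)}$, where $C_G(g)$ is the centralizer of $g$ in $G$. *)

From mathcomp Require Import all_boot all_fingroup all_solvable.
Set Implicit Arguments. Unset Strict Implicit. Unset Printing Implicit Defensive.
Local Open Scope group_scope.

Definition breadth (gT : finGroupType) (p : nat) (G : {set gT}) (g : gT) : nat :=
  logn p #|G : 'C_G[g]|.

From mathcomp Require Import all_boot all_fingroup all_solvable.
Set Implicit Arguments. Unset Strict Implicit. Unset Printing Implicit Defensive.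
Local Open Scope group_scope.

(* As C is maximal, it is normal and G = C<g>.  Work modulo D = C', so that C
   becomes abelian.  For an abelian A normalised by x, the commutators [a, x]
   with a in A form a subgroup K (a |-> [a, x] is a homomorphism on A) that is
   normalised by A<x>, and x centralises A modulo K; hence (A<x>)' <= K.  As
   [a, x] = (x^a)^-1 x, |K| <= |x^A|.  So |G' : D| <= |g^C| <= |G : C_G(g)|. *)

Section CommutatorsWithNormalisingElement.

Variables (gT : finGroupType) (A : {group gT}) (x : gT).
Hypotheses (abA : abelian A) (nAx : x \in 'N(A)).

Definition comms_with := [set [~ a, x] | a in A].

Lemma commg_in_norm a : a \in A -> [~ a, x] \in A.
Proof. by move=> Aa; rewrite groupM ?groupV // memJ_norm. Qed.

Lemma comms_with_group_set : group_set comms_with.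
Proof.
apply/group_setP; split; first by apply/imsetP; exists 1; rewrite ?comm1g.
move=> _ _ /imsetP[a Aa ->] /imsetP[b Ab ->]; apply/imsetP; exists (a * b).
  exact: groupM.
(* [a, x]^b = [a, x] because both b and [a, x] lie in the abelian group A *)
by rewrite commMgJ /conjg -(centsP abA b Ab _ (commg_in_norm Aa)) mulKg.
Qed.

Canonical comms_with_group := Group comms_with_group_set.

Lemma comms_with_sub : comms_with \subset A.
Proof. by apply/subsetP=> _ /imsetP[a Aa ->]; apply: commg_in_norm. Qed.

Lemma comms_with_norm : A <*> <[x]> \subset 'N(comms_with).
Proof.
rewrite join_subG sub_abelian_norm ?comms_with_sub //= cycle_subG inE.
apply/subsetP=> _ /imsetP[_ /imsetP[a Aa ->] ->]; apply/imsetP.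
by exists (a ^ x); rewrite ?memJ_norm // conjRg (conjgE x x) mulKg.
Qed.

Lemma der1_join_cycle_sub : (A <*> <[x]>)^`(1) \subset comms_with.
Proof.
have nKAx := comms_with_norm.
have := nKAx; rewrite join_subG => /andP[nKA nKx].
apply: der1_min => //.
rewrite quotientY // abelianY !quotient_abelian ?cycle_abelian //=.
have Nx : x \in 'N(comms_with) by rewrite (subsetP nKx) ?cycle_id.
rewrite quotient_cycle // cycle_subG.
apply/centP=> _ /morphimP[a Na Aa ->]; apply/esym/commgP/eqP.
by rewrite -morphR //; apply/coset_id/imset_f.
Qed.

Lemma card_comms_with : #|comms_with| <= #|x ^: A|.
Proof.
have -> : comms_with = (fun y => y^-1 * x) @: (x ^: A).
  rewrite -imset_comp; apply: eq_imset => a /=.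
  by rewrite /commg conjgE !invMg invgK !mulgA.
exact: leq_imset_card.
Qed.

Lemma card_der1_join_cycle_abelian : #|(A <*> <[x]>)^`(1)| <= #|x ^: A|.
Proof. exact: leq_trans (subset_leq_card der1_join_cycle_sub) card_comms_with. Qed.

End CommutatorsWithNormalisingElement.

Lemma card_der1_join_cycle (gT : finGroupType) (C : {group gT}) (g : gT) :
  g \in 'N(C) -> #|(C <*> <[g]>)^`(1)| <= #|C^`(1)| * #|g ^: C|.
Proof.
move=> nCg; set D := C^`(1).
have nCH : C <*> <[g]> \subset 'N(C) by rewrite join_subG normG cycle_subG.
have nDH : C <*> <[g]> \subset 'N(D) := char_norm_trans (der_char 1 C) nCH.
have [nDC nDg] : C \subset 'N(D) /\ g \in 'N(D).
  by move: nDH; rewrite join_subG cycle_subG => /andP.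
have abCD : abelian (C / D) by have := der_abelian 0 C; rewrite derg0.
have nCDg : coset D g \in 'N(C / D).
  by apply: subsetP (quotient_norm D C) _ _; apply: mem_quotient.
rewrite -(Lagrange (dergS 1 (joing_subl C <[g]>))) leq_pmul2l ?cardG_gt0 -/D //.
rewrite -card_quotient ?(subset_trans (der_sub 1 _) nDH) //.
rewrite quotient_der // quotientY ?cycle_subG // quotient_cycle //.
apply: leq_trans (card_der1_join_cycle_abelian abCD nCDg) _.
by rewrite -quotient_class // leq_quotient.
Qed.

Lemma maximal_join_cycle (gT : finGroupType) (M G : {group gT}) (g : gT) :
  maximal M G -> g \in G :\: M -> M <*> <[g]> = G.
Proof.
case/maxgroupP=> /proper_sub sMG maxM /setDP[Gg notMg].
have sMgG : M <*> <[g]> \subset G by rewrite join_subG cycle_subG Gg andbT.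
have Mg_g : g \in M <*> <[g]> by rewrite mem_gen // inE cycle_id orbT.
case: (eqVproper sMgG) => // /maxM/(_ (joing_subl _ _)) eqMgM.
by rewrite -eqMgM Mg_g in notMg.
Qed.

Lemma leq_logn_pnat (p m n : nat) :
  p.-nat m -> p.-nat n -> m <= n -> logn p m <= logn p n.
Proof.
move=> pm pn; rewrite -{1}(part_pnat_id pm) -{1}(part_pnat_id pn) !p_part.
have [p_pr | p_npr] := boolP (prime p); first by rewrite leq_exp2l ?prime_gt1.
by rewrite [logn p m]lognE [logn p n]lognE (negPf p_npr).
Qed.

Theorem lemma2p1 (gT : finGroupType) (p : nat) (G C : {group gT}) (g : gT) :
  prime p -> p.-group G -> C \subset G -> #|G : C| = p ->
  g \in G :\: C ->
  (logn p #|G^`(1)| <= breadth p G g + logn p #|C^`(1)|)%N.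
Proof.
move=> p_pr pG sCG iCG CGg.
have maxC : maximal C G by apply: p_index_maximal; rewrite ?iCG.
have nCg : g \in 'N(C).
  by apply: subsetP (normal_norm (p_maximal_normal pG maxC)) _ _; case/setDP: CGg.
have card_der1G : #|G^`(1)| <= #|C^`(1)| * #|G : 'C_G[g]|.
  rewrite index_cent1 -{1}(maximal_join_cycle maxC CGg).
  apply: leq_trans (card_der1_join_cycle nCg) _.
  by rewrite leq_mul2l subset_leq_card ?classS ?orbT.
rewrite /breadth addnC -lognM ?cardG_gt0 ?indexg_gt0 //.
apply: leq_logn_pnat card_der1G; first exact: pgroupS (der_sub 1 G) pG.
rewrite pnatM (pnat_dvd (dvdn_indexg _ _) pG) andbT.
exact: pgroupS (subset_trans (der_sub 1 C) sCG) pG.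
Qed.
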